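(* Let $f:\mathbb{R}^n\to\mathbb{R}$ and $a:\mathbb{R}^n\to\mathbb{R}^m$ be twice differentiable on $\mathbb{R}^n$, let $\beta_1\in(0,1)$, $\beta_2\in(0,1)$, and $w\in\mathbb{R}^m$ with $w\ge0$. For any constants $C,\mu>0$ the set $\mathbb{Q}_{\mu,C}$ is compact.
   Context: $e$ denotes the all-ones vector, $S=\mathrm{diag}(s)$. For $\mu>0$: $\psi_\mu(x)=f(x)-\mu\sum_{i=1}^m(\beta_1a_i(x)+\log(\mu w_i-a_i(x)))$ (defined when $a(x)<\mu w$), and $\phi_\mu(x,s,y)=\psi_\mu(x)+\|Sy-\mu e\|_\infty^3/\mu^2$. The set $\mathbb{Q}_{\mu,C}$ consists of all $(x,y,s)\in\mathbb{R}^n\times\mathbb{R}^m_{++}\times\mathbb{R}^m_{++}$ such that $s_iy_i/\mu\in[\beta_2,1/\beta_2]$ for all $i$, $a(x)+s=\mu w$, $\phi_\mu(x,s,y)\le C$, and $\|x\|\le C$ (Euclidean norm). *)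

From HB Require Import structures.
From mathcomp Require Import all_boot all_order all_algebra.
From mathcomp Require Import all_classical all_reals all_analysis.
Set Implicit Arguments. Unset Strict Implicit. Unset Printing Implicit Defensive.
Import Order.TTheory GRing.Theory Num.Theory.
Import numFieldNormedType.Exports.
Local Open Scope ring_scope.
Local Open Scope classical_set_scope.

(* Twice differentiable on all of R^n: f is (Frechet) differentiable everywhere
   and, for every direction v, x |-> Df(x) v is differentiable everywhere
   (equivalent to differentiability of x |-> Df(x) in the finite-dim. space
   of linear maps, evaluated coordinatewise). *)
Definition twice_differentiable (R : realType) (n : nat) (W : normedModType R)
  (f : 'rV[R]_n -> W) : Prop :=
  (forall x, differentiable f x) /\
  (forall v x, differentiable ('D_v f) x).

Definition enorm (R : realType) (k : nat) (x : 'rV[R]_k) : R :=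
  Num.sqrt (\sum_(i < k) x ord0 i ^+ 2).

Definition inf_dev (R : realType) (m : nat) (mu : R) (s y : 'rV[R]_m) : R :=
  \big[Num.max/0]_(i < m) `|s ord0 i * y ord0 i - mu|.

Definition psi (R : realType) (n m : nat) (f : 'rV[R]_n -> R)
  (a : 'rV[R]_n -> 'rV[R]_m) (beta1 : R) (w : 'rV[R]_m) (mu : R)
  (x : 'rV[R]_n) : R :=
  f x - mu * \sum_(i < m) (beta1 * a x ord0 i + ln (mu * w ord0 i - a x ord0 i)).

Definition phi (R : realType) (n m : nat) (f : 'rV[R]_n -> R)
  (a : 'rV[R]_n -> 'rV[R]_m) (beta1 : R) (w : 'rV[R]_m) (mu : R)
  (x : 'rV[R]_n) (s y : 'rV[R]_m) : R :=
  psi f a beta1 w mu x + inf_dev mu s y ^+ 3 / mu ^+ 2.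

Definition Qset (R : realType) (n m : nat) (f : 'rV[R]_n -> R)
  (a : 'rV[R]_n -> 'rV[R]_m) (beta1 beta2 : R) (w : 'rV[R]_m) (mu C : R)
  : set ('rV[R]_n * 'rV[R]_m * 'rV[R]_m) :=
  [set p | let: (x, y, s) := (p : 'rV[R]_n * 'rV[R]_m * 'rV[R]_m) in
     (forall i, 0 < (y : 'rV[R]_m) ord0 i) /\ (forall i, 0 < (s : 'rV[R]_m) ord0 i) /\
     (forall i, beta2 <= s ord0 i * y ord0 i / mu <= beta2^-1) /\
     (a x + s = mu *: w) /\
     phi f a beta1 w mu x s y <= C /\
     enorm x <= C].

From HB Require Import structures.
From mathcomp Require Import all_boot all_order all_algebra.
From mathcomp Require Import all_classical all_reals all_analysis.
From mathcomp Require Import lra.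
Import Order.TTheory GRing.Theory Num.Theory.
Import numFieldNormedType.Exports.
Local Open Scope ring_scope.
Local Open Scope classical_set_scope.

(** The constraint [a x + s = mu w] makes [s] a continuous function of [x],
    and [|x| <= C] confines [x] to a compact ball, so [s] is bounded above.
    Each term [beta1 a_i(x) + ln s_i] of the barrier is then bounded above
    too (as [ln s < s]), so [phi <= C] bounds every [ln s_i], hence [s_i],
    below by some [d > 0]; the bracket on [s_i y_i / mu] finally confines
    [y_i] to a compact interval.  Once [s >= d], replacing [ln s_i] by
    [ln (max s_i d)] does not change [phi], and this turns [Q] into a set cut
    out by non-strict inequalities between continuous functions: a closed
    subset of a compact box. *)

Section real_facts.
Context {R : realType}.

Lemma ler_norm_mx_coord {m n} (M : 'M[R]_(m, n)) i j : `|M i j| <= `|M|.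
Proof.
have -> : `|M| = mx_norm M by [].
by rewrite mx_normrE (le_bigmax _ (fun ij : 'I_m * 'I_n => `|M ij.1 ij.2|) (i, j)).
Qed.

Lemma enorm_coord {k} (x : 'rV[R]_k) i : `|x ord0 i| <= enorm x.
Proof.
rewrite /enorm -sqrtr_sqr; apply: ler_wsqrtr.
by rewrite (bigD1 i) //= lerDl sumr_ge0 // => j _; rewrite sqr_ge0.
Qed.

Lemma inf_dev_ge0 {k} (mu : R) (s y : 'rV[R]_k) : 0 <= inf_dev mu s y.
Proof. by apply: (big_ind (fun t : R => 0 <= t)) => // u v u0 v0; rewrite le_max u0. Qed.

Lemma slack_coord {k} {u s v : 'rV[R]_k} :
  u + s = v -> forall i, s ord0 i = v ord0 i - u ord0 i.
Proof. by move=> <- i; rewrite mxE addrAC subrr add0r. Qed.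

Lemma term_ge_of_sum_ge {k} {t : 'I_k -> R} {A B : R} :
  0 <= B -> (forall j, t j <= B) -> A <= \sum_j t j -> forall i, A - k%:R * B <= t i.
Proof.
move=> B0 tB At i; rewrite (bigD1 i) //= in At.
have : \sum_(j | j != i) t j <= k%:R * B.
  apply: (le_trans (ler_sum _ (fun j _ => tB j))).
  have -> : k%:R * B = \sum_(j < k) B by rewrite sumr_const card_ord mulr_natl.
  by rewrite [leRHS](bigD1 i) //= lerDr.
lra.
Qed.

Lemma ler_scale_norm {b : R} (t : R) : 0 <= b <= 1 -> b * t <= `|t|.
Proof.
move=> /andP[b0 b1]; apply: (le_trans (ler_norm _)).
by rewrite normrM ger0_norm // ler_piMl.
Qed.

Lemma barrier_term_le {b s : R} (t : R) : 0 <= b <= 1 -> 0 < s -> b * t + ln s <= `|t| + s.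
Proof. by move=> b01 s0; rewrite lerD ?ler_scale_norm // ltW ?ln_sublinear. Qed.

Lemma ratio_itv_bounds {beta mu d s S y : R} : 0 < beta -> 0 < mu -> 0 < d ->
  d <= s <= S -> beta <= s * y / mu <= beta^-1 ->
  beta * mu / S <= y <= mu / (beta * d).
Proof.
move=> b0 mu0 d0 /andP[ds sS] /andP[lo hi].
have s0 : 0 < s := lt_le_trans d0 ds.
rewrite ler_pdivlMr // in lo; rewrite ler_pdivrMr // -[_^-1 * _]mulrC ler_pdivlMr // in hi.
have y0 : 0 < y by nra.
rewrite ler_pdivrMr ?(lt_le_trans s0) // ler_pdivlMr ?mulr_gt0 //; apply/andP; split; nra.
Qed.

End real_facts.

Section topology_facts.
Context {R : realType} {T : topologicalType}.

Lemma closed_fun_le (g h : T -> R) :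
  continuous g -> continuous h -> closed [set p | g p <= h p].
Proof.
move=> cg ch; have -> : [set p | g p <= h p] = (g - h) @^-1` [set t | t <= 0].
  by apply/seteqP; split => p /=; rewrite subr_le0.
apply: preimage_closed; last exact: closed_le.
by move=> p _; exact: continuousB (cg p) (ch p).
Qed.

Lemma closed_fun_eq (V : normedModType R) (g : T -> V) (v : V) :
  continuous g -> closed [set p | g p = v].
Proof.
move=> cg; apply: (preimage_closed (D := [set v])) => [p _|]; first exact: cg.
exact/accessible_closed_set1/hausdorff_accessible/norm_hausdorff.
Qed.

Lemma closed_forall (I : Type) (P : I -> T -> Prop) :
  (forall i, closed [set p | P i p]) -> closed [set p | forall i, P i p].
Proof.
move=> cP; have -> : [set p | forall i, P i p] = \bigcap_i [set p | P i p].
  by apply/seteqP; split => p /= Pp i => [_|]; exact: Pp.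
by apply: closed_bigI => i _; exact: cP.
Qed.

Lemma compact_continuous_bounded {V : normedModType R} {g : T -> V} {A : set T} :
  compact A -> continuous g -> exists M, forall x, A x -> `|g x| <= M.
Proof.
move=> cA cg.
have [M [_ HM]] := compact_bounded (continuous_compact (continuous_subspaceT cg) cA).
by exists (M + 1) => x Ax; apply: HM; [rewrite ltrDl | exists x].
Qed.

Lemma continuous_coord {k} {v : T -> 'rV[R]_k} {i} :
  continuous v -> continuous (fun t => v t ord0 i).
Proof.
move=> cv t; apply: (continuous_comp (f := v) (g := fun M : 'rV[R]_k => M ord0 i)).
  exact: cv.
exact: coord_continuous.
Qed.

Lemma continuous_inf_dev {k} {mu : R} {s y : T -> 'rV[R]_k} :
  continuous s -> continuous y -> continuous (fun t => inf_dev mu (s t) (y t)).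
Proof.
move=> cs cy; apply: continuous_big => [|i _]; first exact: max_continuous.
move=> t; apply: (continuous_comp (f := fun t => s t ord0 i * y t ord0 i - mu) (g := Num.norm)).
  by apply: cvgB; [apply: cvgM; exact: continuous_coord | exact: cvg_cst].
exact: norm_continuous.
Qed.

End topology_facts.

Section boxes.
Context {R : realType}.

Definition rV_box {k} (l u : R) : set 'rV[R]_k := [set v | forall i, `[l, u] (v ord0 i)].

Lemma compact_rV_box {k} (l u : R) : compact (@rV_box k l u).
Proof. by apply: (@rV_compact _ k (fun=> `[l, u]%classic)) => i; exact: segment_compact. Qed.

Lemma continuous_enorm k : continuous (@enorm R k).
Proof.
move=> x; apply: (continuous_comp _ (@sqrt_continuous R _)).
apply: continuous_big => [|i _]; first exact: add_continuous.
by move=> y; apply: continuousM; exact: coord_continuous.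
Qed.

Lemma compact_enorm_ball k (r : R) : compact [set x : 'rV[R]_k | enorm x <= r].
Proof.
apply: (@subclosed_compact _ _ (rV_box (- r) r)).
- by apply: closed_fun_le; [exact: continuous_enorm | exact: cst_continuous].
- exact: compact_rV_box.
- move=> x /= xr i; rewrite /= in_itv /=.
  by rewrite -ler_norml (le_trans (enorm_coord x i)).
Qed.

End boxes.

Section Qset_compact.
Context {R : realType} {n m : nat} {f : 'rV[R]_n -> R} {a : 'rV[R]_n -> 'rV[R]_m}.
Context {beta1 beta2 : R} {w : 'rV[R]_m} {mu C : R}.
Hypotheses (cf : continuous f) (ca : continuous a).
Hypotheses (hb1 : 0 <= beta1 <= 1) (hb2 : 0 < beta2) (hmu : 0 < mu).

Local Notation triple := ('rV[R]_n * 'rV[R]_m * 'rV[R]_m)%type.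

Definition phi_floor (d : R) (p : triple) : R :=
  f p.1.1 - mu * \sum_(i < m) (beta1 * a p.1.1 ord0 i + ln (Num.max (p.2 ord0 i) d))
  + inf_dev mu p.2 p.1.2 ^+ 3 / mu ^+ 2.

Definition Qset_floor (d : R) : set triple :=
  [set p : triple | forall i, d <= p.2 ord0 i] `&`
  [set p : triple | forall i, beta2 <= p.2 ord0 i * p.1.2 ord0 i / mu] `&`
  [set p : triple | forall i, p.2 ord0 i * p.1.2 ord0 i / mu <= beta2^-1] `&`
  [set p : triple | a p.1.1 + p.2 = mu *: w] `&`
  [set p : triple | phi_floor d p <= C] `&`
  [set p : triple | enorm p.1.1 <= C].

Lemma phi_floorE {d x} {s : 'rV[R]_m} y : (forall i, d <= s ord0 i) -> a x + s = mu *: w ->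
  phi f a beta1 w mu x s y = phi_floor d (x, y, s).
Proof.
move=> sd axs; rewrite /phi /psi /phi_floor /=; congr (_ - _ * _ + _).
apply: eq_bigr => i _; have := slack_coord axs i; rewrite mxE => <-.
by rewrite max_l.
Qed.

Let continuous_x {V : topologicalType} {h : 'rV[R]_n -> V} :
  continuous h -> continuous (fun p : triple => h p.1.1).
Proof.
move=> ch p; apply: (continuous_comp (f := fun p : triple => p.1.1) (g := h)); last exact: ch.
by apply: (continuous_comp (f := fst) (g := fst)); exact: cvg_fst.
Qed.

Let continuous_y : continuous (fun p : triple => p.1.2).
Proof.
by move=> p; apply: (continuous_comp (f := fst) (g := snd)); [exact: cvg_fst | exact: cvg_snd].
Qed.

Let continuous_s : continuous (fun p : triple => p.2).
Proof. by move=> p; exact: cvg_snd. Qed.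

Lemma continuous_phi_floor d : 0 < d -> continuous (phi_floor d).
Proof.
move=> d0 p; apply: cvgD; [apply: cvgB|].
- exact: continuous_x.
- apply: cvgM; first exact: cvg_cst.
  apply: continuous_big => [|i _ {}p]; first exact: add_continuous.
  apply: cvgD.
    by apply: cvgM; [exact: cvg_cst | exact: (continuous_x (continuous_coord (i := i) ca))].
  apply: (continuous_comp (f := fun p : triple => Num.max (p.2 ord0 i) d)).
    by apply: continuous_max; [exact: continuous_coord continuous_s _ | exact: cvg_cst].
  by apply: continuous_ln; rewrite lt_max d0 orbT.
- apply: cvgM; last exact: cvg_cst.
  apply: (continuous_comp (f := fun p : triple => inf_dev mu p.2 p.1.2) (g := fun t : R => t ^+ 3)).
    exact: continuous_inf_dev continuous_s continuous_y _.
  exact: exprn_continuous.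
Qed.

Lemma closed_Qset_floor {d} : 0 < d -> closed (Qset_floor d).
Proof.
move=> d0.
have cratio i : continuous (fun p : triple => p.2 ord0 i * p.1.2 ord0 i / mu).
  move=> p; apply: cvgM; last exact: cvg_cst.
  by apply: cvgM; [exact: continuous_coord continuous_s _ | exact: continuous_coord continuous_y _].
apply: closedI; [apply: closedI; [apply: closedI; [apply: closedI; [apply: closedI|]|]|]|].
- apply: closed_forall => i; apply: closed_fun_le; first exact: cst_continuous.
  exact: continuous_coord continuous_s.
- by apply: closed_forall => i; apply: closed_fun_le; [exact: cst_continuous | exact: cratio].
- by apply: closed_forall => i; apply: closed_fun_le; [exact: cratio | exact: cst_continuous].
- apply: closed_fun_eq => p; apply: cvgD; last exact: continuous_s.
  exact: continuous_x ca p.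
- by apply: closed_fun_le; [exact: continuous_phi_floor | exact: cst_continuous].
- apply: closed_fun_le; last exact: cst_continuous.
  by apply: continuous_x; exact: continuous_enorm.
Qed.

Context {Mf Ma : R}.
Hypotheses (f_bound : forall x, enorm x <= C -> `|f x| <= Mf).
Hypotheses (a_bound : forall x, enorm x <= C -> `|a x| <= Ma).

Local Notation s_max := (mu * `|w| + Ma).
(* On [Q] the barrier sum is at least [(- Mf - C) / mu], each of its [m] terms
   is at most [Ma + s_max], and [beta1 * a_i x <= Ma]: this bounds [ln s_i]. *)
Local Notation s_min := (expR ((- Mf - C) / mu - m%:R * (Ma + s_max) - Ma)).

Lemma slack_le_max {x} {s : 'rV[R]_m} :
  enorm x <= C -> a x + s = mu *: w -> forall i, s ord0 i <= s_max.
Proof.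
move=> xC axs i; rewrite (slack_coord axs) mxE.
have := le_trans (ler_norm_mx_coord (a x) ord0 i) (a_bound x xC).
rewrite ler_norml => /andP[ax _].
have : mu * w ord0 i <= mu * `|w|.
  by rewrite ler_pM2l // (le_trans (ler_norm _) (ler_norm_mx_coord _ _ _)).
lra.
Qed.

Lemma slack_ge_min {p} : Qset f a beta1 beta2 w mu C p -> forall i, s_min <= p.2 ord0 i.
Proof.
case: p => [[x y] s] [_ [s0 [_ [axs [phiC xC]]]]] i /=.
have ax j : `|a x ord0 j| <= Ma := le_trans (ler_norm_mx_coord _ _ _) (a_bound x xC).
have slack j : mu * w ord0 j - a x ord0 j = s ord0 j by rewrite (slack_coord axs) mxE.
have Ma0 : 0 <= Ma := le_trans (normr_ge0 _) (ax i).
have B0 : 0 <= Ma + s_max by rewrite addr_ge0 // (le_trans (ltW (s0 i)) (slack_le_max xC axs i)).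
have term_le j : beta1 * a x ord0 j + ln (mu * w ord0 j - a x ord0 j) <= Ma + s_max.
  rewrite slack (le_trans (barrier_term_le _ hb1 (s0 j))) //.
  exact: lerD (ax j) (slack_le_max xC axs j).
have sum_ge : (- Mf - C) / mu <= \sum_j (beta1 * a x ord0 j + ln (mu * w ord0 j - a x ord0 j)).
  have := f_bound x xC; rewrite ler_norml => /andP[fx _].
  have : 0 <= inf_dev mu s y ^+ 3 / mu ^+ 2 by rewrite divr_ge0 ?exprn_ge0 ?inf_dev_ge0 ?ltW.
  move: phiC; rewrite /phi /psi ler_pdivrMr //; lra.
have := term_ge_of_sum_ge B0 term_le sum_ge i.
have := le_trans (ler_scale_norm (a x ord0 i) hb1) (ax i).
rewrite slack => scale_le term_ge.
rewrite -(lnK (s0 i)) ler_expR; lra.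
Qed.

Lemma Qset_floor_sub_box {d} : 0 < d ->
  Qset_floor d `<=` rV_box (- C) C `*` rV_box (beta2 * mu / s_max) (mu / (beta2 * d))
                     `*` rV_box d s_max.
Proof.
move=> d0 [[x y] s] [[[[[sd lo] hi] axs] _] xC] /=.
have sS := slack_le_max xC axs.
split; [split|] => i /=; rewrite in_itv /=.
- by rewrite -ler_norml (le_trans (enorm_coord x i)).
- by apply: (ratio_itv_bounds (s := s ord0 i)); rewrite ?sd ?sS ?lo ?hi.
- by rewrite sd sS.
Qed.

Lemma Qset_floorE : Qset f a beta1 beta2 w mu C = Qset_floor s_min.
Proof.
apply/seteqP; split => -[[x y] s].
- move=> Qp; have smin := slack_ge_min Qp.
  case: Qp => _ [_ [ratio [axs [phiC xC]]]].
  have [lo hi] : (forall i, beta2 <= s ord0 i * y ord0 i / mu) /\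
                 (forall i, s ord0 i * y ord0 i / mu <= beta2^-1).
    by split=> i; case/andP: (ratio i).
  rewrite (phi_floorE y smin axs) in phiC.
  by do !split.
- move=> /= [[[[[sd lo] hi] axs] phiC] xC].
  have s0 i : 0 < s ord0 i := lt_le_trans (expR_gt0 _) (sd i).
  have {}phiC : phi f a beta1 w mu x s y <= C by rewrite (phi_floorE y sd axs).
  split=> [i|]; last by do !split=> //; move=> i; rewrite lo hi.
  by have := lt_le_trans hb2 (lo i); rewrite pmulr_lgt0 ?invr_gt0 // (pmulr_rgt0 _ (s0 i)).
Qed.

End Qset_compact.

Theorem lemma4 (R : realType) (n m : nat) (f : 'rV[R]_n -> R)
  (a : 'rV[R]_n -> 'rV[R]_m)
  (hf : twice_differentiable f) (ha : twice_differentiable a)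
  (beta1 beta2 : R) (hb1 : 0 < beta1 < 1) (hb2 : 0 < beta2 < 1)
  (w : 'rV[R]_m) (hw : forall i, 0 <= w ord0 i)
  (C mu : R) (hC : 0 < C) (hmu : 0 < mu) :
  compact (Qset f a beta1 beta2 w mu C).
Proof.
have cf : continuous f := fun x => differentiable_continuous (hf.1 x).
have ca : continuous a := fun x => differentiable_continuous (ha.1 x).
have hb1' : 0 <= beta1 <= 1 by case/andP: hb1 => b0 b1; rewrite !ltW.
have [hb2' _] := andP hb2.
have [Mf f_bound] := compact_continuous_bounded (compact_enorm_ball n C) cf.
have [Ma a_bound] := compact_continuous_bounded (compact_enorm_ball n C) ca.
rewrite (Qset_floorE hb1' hb2' hmu f_bound a_bound).
apply: (subclosed_compact _ _ (Qset_floor_sub_box hb2' hmu a_bound (expR_gt0 _))).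
  by apply: (closed_Qset_floor _ _ (expR_gt0 _)); [exact: cf | exact: ca].
by do 2?apply: compact_setX; exact: compact_rV_box.
Qed.
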